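(* Consider the networked closed-loop system described in the context. Assume: $Q,R,T$ are positive definite; $(Q^{1/2},A)$ is observable; $\rho(A-BK)<1$ and $\rho(A-B\bar K)<1$; $P=(A-B\bar K)^\top P(A-B\bar K)+Q+\bar K^\top R\bar K$; and the network satisfies $\mathrm{Prob}\big(\bigcap_{t\ge k}\{\gamma_{t-1}\theta_t=0\}\big)=0$ for all $k\ge0$. Suppose there exists $k_0$ such that $\gamma_{k_0-1}=1$, $\theta_{k_0}=1$, $x(k_0)-x_n(k_0)\in\mathbb{Z}_K$, and the MPC optimization problem is feasible. If the consistent actuator and the ancillary controller are used, then the MPC optimization problem is feasible and $x(k)\in\mathbb{X}$ and $u(k)\in\mathbb{U}$ for all $k\ge k_0$.
   Context: Plant: $x(k+1)=Ax(k)+Bu(k)+w(k)$ with $x(k)\in\mathbb{R}^{n_x}$, $u(k)\in\mathbb{R}^{n_u}$, $(A,B)$ stabilizable, and $w(k)\in\mathbb{W}=\{w: H_w w\le h_w\}$ for all $k$, where $\mathbb{W}$ is compact and contains the origin in its interior. State and input constraint sets $\mathbb{X}=\{x:H_x x\le h_x\}$, $\mathbb{U}=\{u:H_u u\le h_u\}$ are bounded and contain the origin in their interior. $\oplus$ is the Minkowski sum, $\ominus$ the Pontryagin difference, $M\mathbb{P}=\{Mp:p\in\mathbb{P}\}$. Network: binary variables $\theta_k$ ($=1$ iff the packet $U_k$ sent by the remote controller at time $k$ is received by the plant) and $\gamma_k$ ($=1$ iff the packet $X_k$ sent by the plant at time $k$ is received by the controller). Sets: $\mathbb{Z}_K=\bigoplus_{i=0}^\infty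 (A-BK)^i\mathbb{W}$; $\mathbb{X}_c=\mathbb{X}\ominus\mathbb{Z}_K$, $\mathbb{U}_c=\mathbb{U}\ominus(-K)\mathbb{Z}_K$. With $x_a=(x_n,\bar x,\bar u)$ and $A_a=\begin{bmatrix}A-B\bar K & B\bar K & B\\ 0& I&0\\0&0&I\end{bmatrix}$, $X_{f,\bar K}=\{x_a: A_a^k x_a\in\mathbb{X}_{a,\bar K}\ \forall k\ge0\}$ where $\mathbb{X}_{a,\bar K}=\{x_a: x_n\in\mathbb{X}_c,\ \bar u-\bar K(x_n-\bar x)\in\mathbb{U}_c\}$; for fixed $\lambda\in(0,1)$, $X^\lambda_{f,\bar K}=X_{f,\bar K}\cap\{(x_n,\bar x,\bar u):\bar x\in\lambda\mathbb{X}_c,\ \bar u\in\lambda\mathbb{U}_c\}$. Remote MPC at time $k$ (horizon $N$, reference $x_r$): minimize over $\mathbf{u}(0),\dots,\mathbf{u}(N-1),\bar x,\bar u$ the cost $\sum_{i=0}^{N-1}(\|\mathbf{x}(i)-\bar x\|_Q^2+\|\mathbf{u}(i)-\bar u\|_R^2)+\|\mathbf{x}(N)-\bar x\|_P^2+\|\bar x-x_r\|_T^2$ subject to $\mathbf{x}(i+1)=A\mathbf{x}(i)+B\mathbf{u}(i)$, $\mathbf{x}(i)\in\mathbb{X}_c$, $\mathbf{u}(i)\in\mathbb{U}_c$ for $i=0,\dots,N-1$, $\mathbf{x}(0)=\hat x(k|k-1)$, $(\mathbf{x}(N),\bar x,\bar u)\in X^\lambda_{f,\bar K}$, $(A-I)\bar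 x+B\bar u=0$. With optimal solution $\mathbf{u}^*_k,\bar x^*_k,\bar u^*_k$, the controller sends $U_k=\{\mathbf{u}^*_k,\ \bar u^*_k+\bar K\bar x^*_k,\ q_k\}$. Local side: $\Theta_k=\prod_{i=q_k+1}^k\theta_i$ if $\theta_k=1$ and $\Theta_k=0$ otherwise; $s_k=\Theta_k k+(1-\Theta_k)s_{k-1}$. Consistent actuator: $u_n(k)=\mathbf{u}^*_{s_k}(k-s_k)$ if $k-s_k<N$, else $u_n(k)=\bar u^*_{s_k}+\bar K\bar x^*_{s_k}-\bar K x_n(k)$. Nominal model $x_n(k+1)=Ax_n(k)+Bu_n(k)$. Ancillary controller $u(k)=u_n(k)-K(x(k)-x_n(k))$. The plant sends $X_k=\{x_n(k),s_k\}$. Remote estimator: $\hat x(k+1|k)=A\hat x(k|k)+B\hat u(k|k)$ with $\hat x(k|k)=\gamma_k x_n(k)+(1-\gamma_k)\hat x(k|k-1)$, $\hat u(k|k)=\gamma_k u_n(k)+(1-\gamma_k)\mathbf{u}^*_k(0)$ (with $u_n(k)$ recomputed remotely by the consistent actuator rule from $s_k$), and $q_{k+1}=\gamma_k k+(1-\gamma_k)q_k$. *)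

From HB Require Import structures.
From mathcomp Require Import all_boot all_order all_algebra.
From mathcomp Require Import all_classical all_reals all_analysis.
From mathcomp Require Import complex.

Set Implicit Arguments.
Unset Strict Implicit.
Unset Printing Implicit Defensive.

Import Order.TTheory GRing.Theory Num.Theory.
Import numFieldNormedType.Exports.

Local Open Scope classical_set_scope.
Local Open Scope ring_scope.

Section Sets.
Variable R : realType.

Definition lecV n (v w : 'cV[R]_n) : Prop := forall i, v i 0 <= w i 0.

Definition polyhedron n p (H : 'M[R]_(p, n)) (h : 'cV[R]_p) : set 'cV[R]_n :=
  [set x | lecV (H *m x) h].

Definition mx_image m n (M : 'M[R]_(m, n)) (S : set 'cV[R]_n) : set 'cV[R]_m :=
  [set M *m z | z in S].

Definition pdiff n (S Z : set 'cV[R]_n) : set 'cV[R]_n :=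
  [set x | forall z, Z z -> S (x + z)].

Definition scale_set n (lam : R) (S : set 'cV[R]_n) : set 'cV[R]_n :=
  [set lam *: z | z in S].

Definition inf_msum n (Phi : 'M[R]_n) (W : set 'cV[R]_n) : set 'cV[R]_n :=
  [set z | exists ws : nat -> 'cV[R]_n, (forall i, W (ws i)) /\
      (fun N : nat => \sum_(i < N) (Phi ^+ i *m ws i)) @ \oo --> z].

Definition spec_rad_lt1 n (M : 'M[R]_n) : Prop :=
  forall l : R[i], eigenvalue (map_mx (real_complex R) M) l -> `|l| < 1.

Definition qf n (M : 'M[R]_n) (v : 'cV[R]_n) : R := (v^T *m M *m v) 0 0.

Definition posdef n (M : 'M[R]_n) : Prop :=
  M^T = M /\ forall v : 'cV[R]_n, v != 0 -> 0 < qf M v.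

Definition possemidef n (M : 'M[R]_n) : Prop :=
  M^T = M /\ forall v : 'cV[R]_n, 0 <= qf M v.

Definition observable p n (C : 'M[R]_(p, n)) (A : 'M[R]_n) : Prop :=
  forall v : 'cV[R]_n, (forall i : nat, C *m (A ^+ i *m v) = 0) -> v = 0.

Definition stabilizable nx nu (A : 'M[R]_nx) (B : 'M[R]_(nx, nu)) : Prop :=
  exists K : 'M[R]_(nu, nx), spec_rad_lt1 (A - B *m K).

End Sets.

Section MPC.
Variables (R : realType) (nx nu : nat).
Variables (A : 'M[R]_nx) (B : 'M[R]_(nx, nu)) (Kb : 'M[R]_(nu, nx)).
Variables (Xc : set 'cV[R]_nx) (Uc : set 'cV[R]_nu) (lam : R).

(* one step of x_a(k+1) = A_a x_a(k), x_a = (x_n, xbar, ubar) *)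
Definition Aa_step (xa : 'cV[R]_nx * 'cV[R]_nx * 'cV[R]_nu) :=
  let: (xn, xb, ub) := xa in
  ((A - B *m Kb) *m xn + B *m Kb *m xb + B *m ub, xb, ub).

Definition Xa_set (xa : 'cV[R]_nx * 'cV[R]_nx * 'cV[R]_nu) : Prop :=
  let: (xn, xb, ub) := xa in Xc xn /\ Uc (ub - Kb *m (xn - xb)).

Definition Xf_set (xa : 'cV[R]_nx * 'cV[R]_nx * 'cV[R]_nu) : Prop :=
  forall k : nat, Xa_set (iter k Aa_step xa).

Definition Xf_lam (xa : 'cV[R]_nx * 'cV[R]_nx * 'cV[R]_nu) : Prop :=
  Xf_set xa /\ scale_set lam Xc xa.1.2 /\ scale_set lam Uc xa.2.

Fixpoint pred_state (x0 : 'cV[R]_nx) (u : nat -> 'cV[R]_nu) (i : nat) : 'cV[R]_nx :=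
  match i with
  | 0 => x0
  | i'.+1 => A *m pred_state x0 u i' + B *m u i'
  end.

Variables (N : nat) (Q : 'M[R]_nx) (Rw : 'M[R]_nu) (T P : 'M[R]_nx)
  (xr : 'cV[R]_nx).

(* constraints of the MPC problem with initial state x0; decision variables
   u(0..N-1) (values of u beyond N-1 are irrelevant), xbar, ubar *)
Definition mpc_admissible (x0 : 'cV[R]_nx) (u : nat -> 'cV[R]_nu)
    (xb : 'cV[R]_nx) (ub : 'cV[R]_nu) : Prop :=
  (forall i, (i < N)%N -> Xc (pred_state x0 u i) /\ Uc (u i)) /\
  Xf_lam (pred_state x0 u N, xb, ub) /\
  (A - 1%:M) *m xb + B *m ub = 0.

Definition mpc_cost (x0 : 'cV[R]_nx) (u : nat -> 'cV[R]_nu)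
    (xb : 'cV[R]_nx) (ub : 'cV[R]_nu) : R :=
  \sum_(i < N) (qf Q (pred_state x0 u i - xb) + qf Rw (u i - ub))
  + qf P (pred_state x0 u N - xb) + qf T (xb - xr).

Definition mpc_feasible (x0 : 'cV[R]_nx) : Prop :=
  exists u xb ub, mpc_admissible x0 u xb ub.

Definition mpc_optimal (x0 : 'cV[R]_nx) (u : nat -> 'cV[R]_nu)
    (xb : 'cV[R]_nx) (ub : 'cV[R]_nu) : Prop :=
  mpc_admissible x0 u xb ub /\
  forall u' xb' ub', mpc_admissible x0 u' xb' ub' ->
    mpc_cost x0 u xb ub <= mpc_cost x0 u' xb' ub'.

Record trajectory := Traj {
  tr_x : nat -> 'cV[R]_nx;
  tr_xn : nat -> 'cV[R]_nx;
  tr_u : nat -> 'cV[R]_nu;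
  tr_un : nat -> 'cV[R]_nu;
  tr_s : nat -> nat;
  tr_q : nat -> nat;
  tr_xhat : nat -> 'cV[R]_nx;
  tr_useq : nat -> nat -> 'cV[R]_nu;
  tr_xbar : nat -> 'cV[R]_nx;
  tr_ubar : nat -> 'cV[R]_nu
}.

Definition Theta (theta : nat -> bool) (q : nat -> nat) (k : nat) : bool :=
  theta k && all theta (index_iota (q k).+1 k.+1).

Definition cons_act (tr : trajectory) (k : nat) : 'cV[R]_nu :=
  let s := tr_s tr k in
  if (k - s < N)%N then tr_useq tr s (k - s)
  else tr_ubar tr s + Kb *m tr_xbar tr s - Kb *m tr_xn tr k.

Variable K : 'M[R]_(nu, nx).

(* the closed loop: plant, consistent actuator, nominal model, ancillary
   controller, remote estimator and remote MPC (which transmits an optimal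
   solution whenever the problem is feasible) *)
Definition closed_loop (theta gamma : nat -> bool) (w : nat -> 'cV[R]_nx)
    (tr : trajectory) : Prop :=
  (forall k, tr_x tr k.+1 = A *m tr_x tr k + B *m tr_u tr k + w k) /\
  (forall k, tr_xn tr k.+1 = A *m tr_xn tr k + B *m tr_un tr k) /\
  (forall k, tr_u tr k = tr_un tr k - K *m (tr_x tr k - tr_xn tr k)) /\
  (forall k, tr_un tr k = cons_act tr k) /\
  (forall k, tr_s tr k.+1 =
     if Theta theta (tr_q tr) k.+1 then k.+1 else tr_s tr k) /\
  (forall k, tr_q tr k.+1 = if gamma k then k else tr_q tr k) /\
  (forall k, tr_xhat tr k.+1 =
     A *m (if gamma k then tr_xn tr k else tr_xhat tr k)
     + B *m (if gamma k then tr_un tr k else tr_useq tr k 0)) /\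
  (forall k, mpc_feasible (tr_xhat tr k) ->
     mpc_optimal (tr_xhat tr k) (tr_useq tr k) (tr_xbar tr k) (tr_ubar tr k)).

End MPC.

From HB Require Import structures.
From mathcomp Require Import all_boot all_order all_algebra.
From mathcomp Require Import all_classical all_reals all_analysis.
From mathcomp Require Import complex.
Import Order.TTheory GRing.Theory Num.Theory.
Import numFieldNormedType.Exports.
Local Open Scope classical_set_scope.
Local Open Scope ring_scope.

Set Implicit Arguments.
Unset Strict Implicit.
Unset Printing Implicit Defensive.

(** The tracking error [e = x - x_n] obeys [e(k+1) = (A - B K) e(k) + w(k)], so it
    never leaves the robust invariant set [Z_K].  Between two accepted packets the
    consistent actuator replays the last received optimal plan and then switches
    to the terminal law; since the terminal set is positively invariant, this
    nominal trajectory stays in [X_c x U_c] forever, and from each of its points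
    the shifted plan is again admissible.  The remote estimate is always such a
    point (of the plan in use, or of the newest plan after one step), so the MPC
    problem stays feasible, and [x = x_n + e], [u = u_n - K e] satisfy the
    original constraints because [X_c = X (-) Z_K] and [U_c = U (-) (-K) Z_K]. *)

Lemma cvg_mulmxl (R : realType) m n (M : 'M[R]_(m, n)) (f : nat -> 'cV[R]_n) z :
  f @ \oo --> z -> (fun k => M *m f k) @ \oo --> M *m z.
Proof.
move=> fz.
have colsE (v : 'cV[R]_n) : M *m v = \sum_(j < n) (v j 0 *: col j M).
  apply/matrixP => i k; rewrite !mxE summxE.
  by apply: eq_bigr => j _; rewrite !mxE ord1 mulrC.
rewrite colsE; under eq_fun do rewrite colsE.
apply: (cvg_big (@add_continuous _)) => j _.
apply: cvgZ; last exact: cvg_cst.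
exact: (cvg_comp _ _ fz (@coord_continuous R n 1 j 0 z)).
Qed.

Lemma inf_msum_step (R : realType) n (Phi : 'M[R]_n) (W : set 'cV[R]_n) z w :
  inf_msum Phi W z -> W w -> inf_msum Phi W (Phi *m z + w).
Proof.
move=> [ws [Wws wsz]] Ww.
pose ws' i := if i is i'.+1 then ws i' else w.
exists ws'; split; first by case.
rewrite -cvg_shiftS /=.
have sumE M : \sum_(i < M.+1) (Phi ^+ i *m ws' i)
    = Phi *m (\sum_(i < M) (Phi ^+ i *m ws i)) + w.
  rewrite big_ord_recl /= expr0 mul1mx addrC mulmx_sumr; congr (_ + _).
  by apply: eq_bigr => i _; rewrite /= exprS mulmxA.
under eq_fun do rewrite sumE.
by apply: cvgD; [exact: cvg_mulmxl | exact: cvg_cst].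
Qed.

Lemma pdiff_sub (R : realType) n (S Z : set 'cV[R]_n) x y :
  pdiff S Z y -> Z (x - y) -> S x.
Proof. by move=> Sy /Sy; rewrite addrC subrK. Qed.

Section ConsistentPlan.
Variables (R : realType) (nx nu : nat).
Variables (A : 'M[R]_nx) (B : 'M[R]_(nx, nu)) (Kb : 'M[R]_(nu, nx)) (N : nat).
Variables (x0 : 'cV[R]_nx) (u : nat -> 'cV[R]_nu) (xb : 'cV[R]_nx) (ub : 'cV[R]_nu).

(* The nominal trajectory generated by the consistent actuator from one MPC
   solution [(u, xb, ub)] when no further packet is accepted. *)
Fixpoint plan_state (j : nat) : 'cV[R]_nx :=
  if j is i.+1 then
    A *m plan_state i + B *m (if (i < N)%N then u i else ub + Kb *m xb - Kb *m plan_state i)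
  else x0.

Definition plan_input (j : nat) : 'cV[R]_nu :=
  if (j < N)%N then u j else ub + Kb *m xb - Kb *m plan_state j.

Lemma plan_stateS j : plan_state j.+1 = A *m plan_state j + B *m plan_input j.
Proof. by []. Qed.

Lemma plan_state_pred j : (j <= N)%N -> plan_state j = pred_state A B x0 u j.
Proof. by elim: j => [//|j IHj] ltjN /=; rewrite ltjN IHj // ltnW. Qed.

Lemma pred_state_plan_shift j i :
  pred_state A B (plan_state j) (fun i => plan_input (j + i)) i = plan_state (j + i).
Proof. by elim: i => [|i IHi]; rewrite ?addn0 //= IHi addnS. Qed.

Lemma iter_Aa_step_plan m :
  iter m (Aa_step A B Kb) (plan_state N, xb, ub) = (plan_state (N + m), xb, ub).
Proof.
elim: m => [|m IHm]; first by rewrite addn0.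
rewrite iterS IHm addnS /= ltnNge leq_addr /=; congr (_, _, _).
rewrite mulmxBl !mulmxDr mulmxN !mulmxA -!addrA; congr (_ + _).
by rewrite addrC addrAC addrC.
Qed.

Variables (Xc : set 'cV[R]_nx) (Uc : set 'cV[R]_nu) (lam : R).
Hypothesis admissible : mpc_admissible A B Kb Xc Uc lam N x0 u xb ub.

Lemma plan_constraints j : Xc (plan_state j) /\ Uc (plan_input j).
Proof.
have [stage [[terminal _] _]] := admissible.
rewrite /plan_input; case: ltnP => [ltjN|leNj].
  by rewrite (plan_state_pred (ltnW ltjN)); exact: stage.
have := terminal (j - N)%N.
rewrite -plan_state_pred // iter_Aa_step_plan subnKC //= => -[Xj Uj].
by split=> //; move: Uj; rewrite mulmxBr opprB addrA.
Qed.

Lemma plan_shift_admissible j :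
  mpc_admissible A B Kb Xc Uc lam N (plan_state j) (fun i => plan_input (j + i)) xb ub.
Proof.
have [_ [[terminal scaled] steady]] := admissible.
split; first by move=> i _; rewrite pred_state_plan_shift; exact: plan_constraints.
split=> //; split=> // k.
rewrite pred_state_plan_shift addnC -iter_Aa_step_plan -iterD.
by have := terminal (k + j)%N; rewrite plan_state_pred.
Qed.

Lemma plan_state_feasible j : mpc_feasible A B Kb Xc Uc lam N (plan_state j).
Proof. by exists (fun i => plan_input (j + i)), xb, ub; exact: plan_shift_admissible. Qed.

End ConsistentPlan.

Lemma Theta_all_index_iota (theta : nat -> bool) (q : nat -> nat) k :
  (q k < k)%N -> Theta theta q k = all theta (index_iota (q k).+1 k.+1).
Proof.
move=> ltqk; rewrite /Theta andb_idl // => /allP; apply.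
by rewrite mem_index_iota ltqk /=.
Qed.

Lemma Theta_predS (theta : nat -> bool) (q : nat -> nat) k :
  q k.+1 = q k -> (q k < k)%N -> Theta theta q k.+1 -> Theta theta q k.
Proof.
move=> qkS ltqk; rewrite !Theta_all_index_iota ?qkS //; last exact: ltnW.
move=> /allP all_k1; apply/allP => i; rewrite mem_index_iota => /andP[lo hi].
by apply: all_k1; rewrite mem_index_iota lo; exact: leqW.
Qed.

Section ClosedLoop.
Variables (R : realType) (nx nu : nat).
Variables (A : 'M[R]_nx) (B : 'M[R]_(nx, nu)) (K Kb : 'M[R]_(nu, nx)).
Variables (Xc : set 'cV[R]_nx) (Uc : set 'cV[R]_nu) (lam : R) (N : nat).
Variables (Q : 'M[R]_nx) (Rw : 'M[R]_nu) (T P : 'M[R]_nx) (xr : 'cV[R]_nx).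
Variables (theta gamma : nat -> bool) (w : nat -> 'cV[R]_nx).
Variable tr : trajectory R nx nu.
Hypothesis loop : closed_loop A B Kb Xc Uc lam N Q Rw T P xr K theta gamma w tr.

Local Notation x := (tr_x tr).
Local Notation xn := (tr_xn tr).
Local Notation u := (tr_u tr).
Local Notation un := (tr_un tr).
Local Notation s := (tr_s tr).
Local Notation q := (tr_q tr).
Local Notation xhat := (tr_xhat tr).
Local Notation useq := (tr_useq tr).
Local Notation plan k :=
  (plan_state A B Kb N (xhat k) (useq k) (tr_xbar tr k) (tr_ubar tr k)).
Local Notation plan_in k :=
  (plan_input A B Kb N (xhat k) (useq k) (tr_xbar tr k) (tr_ubar tr k)).
Local Notation admissible k :=
  (mpc_admissible A B Kb Xc Uc lam N (xhat k) (useq k) (tr_xbar tr k) (tr_ubar tr k)).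
Local Notation feasible v := (mpc_feasible A B Kb Xc Uc lam N v).

Let plantS k : x k.+1 = A *m x k + B *m u k + w k.
Proof. by case: loop. Qed.
Let nominalS k : xn k.+1 = A *m xn k + B *m un k.
Proof. by case: loop => _ []. Qed.
Let ancillary k : u k = un k - K *m (x k - xn k).
Proof. by case: loop => _ [_ []]. Qed.
Let actuator k : un k = cons_act Kb N tr k.
Proof. by case: loop => _ [_ [_ []]]. Qed.
Let sS k : s k.+1 = if Theta theta q k.+1 then k.+1 else s k.
Proof. by case: loop => _ [_ [_ [_ []]]]. Qed.
Let qS k : q k.+1 = if gamma k then k else q k.
Proof. by case: loop => _ [_ [_ [_ [_ []]]]]. Qed.
Let xhatS k : xhat k.+1 = A *m (if gamma k then xn k else xhat k)
                         + B *m (if gamma k then un k else useq k 0).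
Proof. by case: loop => _ [_ [_ [_ [_ [_ []]]]]]. Qed.

Lemma feasible_admissible k : feasible (xhat k) -> admissible k.
Proof. by case: loop => _ [_ [_ [_ [_ [_ [_ opt]]]]]] /opt[]. Qed.

Lemma ancillary_deviation k : u k - un k = - K *m (x k - xn k).
Proof. by rewrite ancillary addrAC subrr add0r mulNmx. Qed.

Lemma ancillary_errorS k :
  x k.+1 - xn k.+1 = (A - B *m K) *m (x k - xn k) + w k.
Proof.
have -> : x k.+1 - xn k.+1 = A *m (x k - xn k) + B *m (u k - un k) + w k.
  by rewrite plantS nominalS !mulmxBr addrAC opprD addrACA.
by rewrite ancillary_deviation mulmxA mulmxN mulNmx mulmxBl.
Qed.

Lemma error_in_inf_msum (W : set 'cV[R]_nx) k0 :
  (forall k, W (w k)) -> inf_msum (A - B *m K) W (x k0 - xn k0) ->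
  forall k, (k0 <= k)%N -> inf_msum (A - B *m K) W (x k - xn k).
Proof.
move=> Ww e0 k /subnKC <-; elim: (k - k0)%N => [|d IHd]; first by rewrite addn0.
by rewrite addnS ancillary_errorS; exact: inf_msum_step.
Qed.

Lemma xhat_acked k : gamma k -> xhat k.+1 = xn k.+1.
Proof. by move=> gk; rewrite xhatS nominalS gk. Qed.

Lemma Theta_s k : (0 < k)%N -> Theta theta q k -> s k = k.
Proof. by move=> k_gt0 Th; rewrite -(prednK k_gt0) sS prednK // Th. Qed.

Lemma nominal_input_plan k :
  xn k = plan (s k) (k - s k) -> un k = plan_in (s k) (k - s k).
Proof. by move=> xnE; rewrite actuator /cons_act /plan_input -xnE. Qed.

Lemma nominal_planS k : (s k <= k)%N ->
  xn k = plan (s k) (k - s k) -> xn k.+1 = plan (s k) (k.+1 - s k).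
Proof.
move=> le_sk xnE.
by rewrite nominalS (nominal_input_plan xnE) (subSn le_sk) plan_stateS -xnE.
Qed.

Hypothesis N_gt0 : (0 < N)%N.

Lemma actuator_restart k : (0 < k)%N -> Theta theta q k -> un k = useq k 0.
Proof. by move=> k_gt0 Th; rewrite actuator /cons_act Theta_s // subnn N_gt0. Qed.

Lemma estimate_feasibleS k : (s k <= k)%N -> admissible (s k) ->
  xn k = plan (s k) (k - s k) -> feasible (xhat k) -> feasible (xhat k.+1).
Proof.
move=> le_sk adm xnE fk; case gk: (gamma k).
  by rewrite xhat_acked // (nominal_planS le_sk xnE); exact: plan_state_feasible.
have := plan_state_feasible (feasible_admissible fk) 1.
by rewrite /= N_gt0 xhatS gk.
Qed.

Variable k0 : nat.
Hypotheses (k0_gt0 : (0 < k0)%N) (ack_k0 : gamma k0.-1) (recv_k0 : theta k0).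

Lemma q_k0 : q k0 = k0.-1.
Proof. by rewrite -{1}(prednK k0_gt0) qS ack_k0. Qed.

Lemma Theta_k0 : Theta theta q k0.
Proof. by rewrite /Theta q_k0 prednK // /index_iota subSn // subnn /= recv_k0. Qed.

Lemma q_lt k : (k0 <= k)%N -> (q k < k)%N.
Proof.
move=> /subnKC <-; elim: (k - k0)%N => [|d IHd].
  by rewrite addn0 q_k0 prednK.
by rewrite addnS qS; case: ifP => _ //; exact: ltnW.
Qed.

Lemma estimate_consistent k : (k0 <= k)%N -> Theta theta q k -> xhat k = xn k.
Proof.
move=> /subnKC <-; elim: (k - k0)%N => [|d IHd].
  by rewrite addn0 -(prednK k0_gt0) (xhat_acked ack_k0).
rewrite addnS; case gk: (gamma (k0 + d)); first by rewrite xhat_acked.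
move=> Th; have le_k0k := leq_addr d k0.
have Thk : Theta theta q (k0 + d).
  by apply: Theta_predS Th; [rewrite qS gk | exact: q_lt].
have k_gt0 := leq_trans k0_gt0 le_k0k.
by rewrite xhatS gk nominalS actuator_restart // IHd.
Qed.

Hypothesis feasible_k0 : feasible (xhat k0).

Lemma closed_loop_invariant k : (k0 <= k)%N ->
  [/\ feasible (xhat k), (s k <= k)%N, admissible (s k) & xn k = plan (s k) (k - s k)].
Proof.
have restart j : (k0 <= j)%N -> Theta theta q j -> feasible (xhat j) ->
    [/\ feasible (xhat j), (s j <= j)%N, admissible (s j) & xn j = plan (s j) (j - s j)].
  move=> le_k0j Th fj; rewrite Theta_s ?(leq_trans k0_gt0 le_k0j) // subnn.
  by rewrite -(estimate_consistent le_k0j Th); split=> //; exact: feasible_admissible.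
move=> /subnKC <-; elim: (k - k0)%N => [|d [fk le_sk adm xnE]].
  by rewrite addn0; apply: restart => //; exact: Theta_k0.
have fk1 := estimate_feasibleS le_sk adm xnE fk.
rewrite addnS; case Th: (Theta theta q (k0 + d).+1).
  by apply: restart => //; rewrite -addnS leq_addr.
by rewrite sS Th; split=> //; [exact: leqW | exact: nominal_planS].
Qed.

End ClosedLoop.

Theorem proposition2 (R : realType) (nx nu pw px pu : nat)
  (A : 'M[R]_nx) (B : 'M[R]_(nx, nu)) (K Kb : 'M[R]_(nu, nx))
  (Hw : 'M[R]_(pw, nx)) (hw : 'cV[R]_pw)
  (Hx : 'M[R]_(px, nx)) (hx : 'cV[R]_px)
  (Hu : 'M[R]_(pu, nu)) (hu : 'cV[R]_pu)
  (Q : 'M[R]_nx) (Rw : 'M[R]_nu) (T P : 'M[R]_nx) (xr : 'cV[R]_nx)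
  (N : nat) (lam : R)
  (d : measure_display) (Omega : measurableType d) (Pr : probability Omega R)
  (theta gamma : nat -> Omega -> bool) :
  let W := polyhedron Hw hw in
  let X := polyhedron Hx hx in
  let U := polyhedron Hu hu in
  let ZK := inf_msum (A - B *m K) W in
  let Xc := pdiff X ZK in
  let Uc := pdiff U (mx_image (- K) ZK) in
  stabilizable A B ->
  compact W -> (W°) 0 ->
  bounded_set X -> (X°) 0 ->
  bounded_set U -> (U°) 0 ->
  posdef Q -> posdef Rw -> posdef T ->
  (exists Qh : 'M[R]_nx, possemidef Qh /\ Qh *m Qh = Q /\ observable Qh A) ->
  spec_rad_lt1 (A - B *m K) -> spec_rad_lt1 (A - B *m Kb) ->
  P = (A - B *m Kb)^T *m P *m (A - B *m Kb) + Q + Kb^T *m Rw *m Kb ->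
  (0 < lam < 1) -> (0 < N)%N ->
  (forall t, measurable [set om | theta t om]) ->
  (forall t, measurable [set om | gamma t om]) ->
  (forall k : nat, (0 < k)%N ->
     Pr (\bigcap_(t in [set t : nat | (k <= t)%N])
           [set om | gamma t.-1 om && theta t om = false]) = 0%E) ->
  forall (om : Omega) (w : nat -> 'cV[R]_nx)
         (tr : trajectory R nx nu) (k0 : nat),
  (forall k, W (w k)) ->
  closed_loop A B Kb Xc Uc lam N Q Rw T P xr K
    (fun k => theta k om) (fun k => gamma k om) w tr ->
  (0 < k0)%N -> gamma k0.-1 om -> theta k0 om ->
  ZK (tr_x tr k0 - tr_xn tr k0) ->
  mpc_feasible A B Kb Xc Uc lam N (tr_xhat tr k0) ->
  forall k, (k0 <= k)%N ->
    mpc_feasible A B Kb Xc Uc lam N (tr_xhat tr k) /\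
    X (tr_x tr k) /\ U (tr_u tr k).
Proof.
move=> W X U ZK Xc Uc _ _ _ _ _ _ _ _ _ _ _ _ _ _ _ N_gt0 _ _ _.
move=> om w tr k0 Ww loop k0_gt0 ack recv e0 f0 k le_k0k.
have [fk _ adm xnE] := closed_loop_invariant loop N_gt0 k0_gt0 ack recv f0 le_k0k.
have [Xc_xn Uc_un] := plan_constraints adm (k - tr_s tr k).
rewrite -xnE -(nominal_input_plan loop xnE) in Xc_xn Uc_un.
have ek := error_in_inf_msum loop Ww e0 le_k0k.
split=> //; split; first exact: pdiff_sub Xc_xn ek.
apply: pdiff_sub Uc_un _; rewrite (ancillary_deviation loop).
by exists (tr_x tr k - tr_xn tr k).
Qed.
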